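(* Let $p\in P$ and consider $F_p$ extended to the one-point compactification $S^3=\mathbb{R}^3\cup\{\infty\}$ by declaring $\infty$ a fixed point. Then $F_p$ is not $C^1$ at $\infty$.
   Context: For $p=(a,b,c)\in\mathbb{R}^3$, $F_p$ is the Rössler vector field $\dot x=-y-z,\ \dot y=x+ay,\ \dot z=bx+z(x-c)$ on $\mathbb{R}^3$. $P\subseteq\mathbb{R}^3$ is an open set of parameters such that for every $p=(a,b,c)\in P$: $a,b\in(0,1)$, $c>1$; $F_p$ has exactly two fixed points $P_{In}=(0,0,0)$ and $P_{Out}=(c-ab,b-\frac{c}{a},\frac{c}{a}-b)$, both saddle-foci, $P_{In}$ with one-dimensional stable manifold and $P_{Out}$ with one-dimensional unstable manifold; and at least one of the saddle indices at $P_{In},P_{Out}$ is $<1$. *)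

From HB Require Import structures.
From mathcomp Require Import all_boot all_order all_algebra.
From mathcomp Require Import all_classical all_reals all_analysis.
Set Implicit Arguments. Unset Strict Implicit. Unset Printing Implicit Defensive.
Import Order.TTheory GRing.Theory Num.Theory.
Import numFieldNormedType.Exports.
Local Open Scope classical_set_scope.
Local Open Scope ring_scope.

Section Rossler.
Variable R : realType.
Notation V := 'rV[R]_3.

Definition cx (u : V) : R := u 0 0.
Definition cy (u : V) : R := u 0 1.
Definition cz (u : V) : R := u 0 2%:R.

Definition mkv (e1 e2 e3 : R) : V := \row_(j < 3) nth 0 [:: e1; e2; e3] j.

Definition rossler (a b c : R) (u : V) : V :=
  mkv (- cy u - cz u) (cx u + a * cy u) (b * cx u + cz u * (cx u - c)).

Definition rossler_jac (a b c : R) (u : V) : 'M[R]_3 :=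
  \matrix_(i < 3, j < 3)
    nth 0 (nth [::] [:: [:: 0; -1; -1];
                         [:: 1; a; 0];
                         [:: b + cz u; 0; cx u - c]] i) j.

Definition P_In : V := mkv 0 0 0.
Definition P_Out (a b c : R) : V := mkv (c - a * b) (b - c / a) (c / a - b).

(* Saddle-focus with one-dimensional stable manifold: eigenvalues
   gamma < 0 (real) and rho +- i omega with rho > 0, omega <> 0.
   Its saddle index is nu = |rho| / |gamma|. *)
Definition saddle_focus_stable1 (J : 'M[R]_3) (nu : R) : Prop :=
  exists gam rho om : R,
    [/\ gam < 0, 0 < rho, om != 0,
        char_poly J = ('X - gam%:P) * (('X - rho%:P) ^+ 2 + (om ^+ 2)%:P)
      & nu = rho / (- gam)].

Definition saddle_focus_unstable1 (J : 'M[R]_3) (nu : R) : Prop :=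
  exists gam rho om : R,
    [/\ 0 < gam, rho < 0, om != 0,
        char_poly J = ('X - gam%:P) * (('X - rho%:P) ^+ 2 + (om ^+ 2)%:P)
      & nu = (- rho) / gam].

Definition rossler_param_ok (p : R * R * R) : Prop :=
  let: (a, b, c) := p in
  [/\ 0 < a < 1, 0 < b < 1, 1 < c,
      ((forall u : V, rossler a b c u = 0 <-> (u = P_In \/ u = P_Out a b c)) /\
      P_In <> P_Out a b c) &
      exists nuIn nuOut : R,
        [/\ saddle_focus_stable1 (rossler_jac a b c P_In) nuIn,
            saddle_focus_unstable1 (rossler_jac a b c (P_Out a b c)) nuOut &
            (nuIn < 1 \/ nuOut < 1)]].

(* Euclidean squared norm and the inversion chart of S^3 = R^3 u {oo}
   around oo:  y = x / |x|^2  (oo corresponds to y = 0). *)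
Definition sqnorm (u : V) : R := \sum_(j < 3) u 0 j ^+ 2.
Definition inversion (u : V) : V := (sqnorm u)^-1 *: u.

(* The extension of a vector field F on R^3 to S^3 (oo a fixed point),
   expressed in the chart at oo: pushforward of F by the inversion on
   y <> 0, and 0 at y = 0. *)
Definition field_at_infinity (F : V -> V) (y : V) : V :=
  if y == 0 then 0 else 'd inversion (inversion y) (F (inversion y)).

(* f is C^1 near a: differentiable on an open neighbourhood U of a with
   derivative depending continuously on the point (checked on each
   direction v, which in finite dimension is the same as operator-norm
   continuity). *)
Definition C1_at (f : V -> V) (a : V) : Prop :=
  exists U : set V,
    [/\ open U, U a,
        (forall x, U x -> differentiable f x) &
        (forall (v : V) (x : V), U x ->
           (fun w => 'd f w v) @ x --> 'd f x v)].

End Rossler.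

From HB Require Import structures.
From mathcomp Require Import all_boot all_order all_algebra.
From mathcomp Require Import all_classical all_reals all_analysis.
From mathcomp Require Import ring.
Import Order.TTheory GRing.Theory Num.Theory.
Import numFieldNormedType.Exports.
Local Open Scope classical_set_scope.
Local Open Scope ring_scope.

(* F_p is quadratic, while the differential of the inversion y = x / |x|^2
   at x scales vectors by |x|^-2; so in the chart at infinity the pushed
   forward field stays bounded near y = 0 without tending to 0.  Along the
   ray y = t (1, 0, 1) its first component is exactly -1/2 + (c - b) t, hence
   the extension is not even continuous at infinity. *)

Section InversionChart.
Variable R : realType.
Notation V := 'rV[R]_3.

Lemma sum_ord3 (f : 'I_3 -> R) : \sum_(j < 3) f j = f 0 + f 1 + f 2%:R.
Proof.
rewrite !big_ord_recl big_ord0 addr0 addrA.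
by congr (f _ + f _ + f _); apply/val_inj.
Qed.

Lemma sqnorm_mkv (e1 e2 e3 : R) : sqnorm (mkv e1 e2 e3) = e1 ^+ 2 + e2 ^+ 2 + e3 ^+ 2.
Proof. by rewrite /sqnorm sum_ord3 !mxE. Qed.

Lemma sqnormZ (k : R) (u : V) : sqnorm (k *: u) = k ^+ 2 * sqnorm u.
Proof.
by rewrite /sqnorm mulr_sumr; apply: eq_bigr => j _; rewrite mxE exprMn.
Qed.

Lemma sqnorm_eq0 (u : V) : (sqnorm u == 0) = (u == 0).
Proof.
rewrite /sqnorm psumr_eq0; last by move=> j _; exact: sqr_ge0.
apply/idP/eqP => [/allP u0|->]; last by apply/allP => j _; rewrite mxE expr2 mulr0 eqxx.
apply/rowP => j; rewrite mxE.
by apply/eqP; rewrite -sqrf_eq0; apply: u0; rewrite mem_index_enum.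
Qed.

Global Instance is_derive_coord (x v : V) i j : is_derive x v (fun u : V => u i j) (v i j).
Proof.
have dv := @derivable_id _ _ x v.
apply: DeriveDef; first by move/derivable_mxP: dv; apply.
by rewrite -[in RHS](derive_id x v) derive_mx // mxE.
Qed.

Lemma sqnormE : sqnorm (R:=R) = \sum_(j < 3) (fun u : V => u 0 j) ^+ 2.
Proof. by apply/funext => u; rewrite fct_sumE. Qed.

Lemma differentiable_sqnorm (x : V) : differentiable (sqnorm (R:=R)) x.
Proof.
rewrite sqnormE; apply: differentiable_sum => j.
exact/differentiableX/differentiable_coord.
Qed.

Lemma is_derive_sqnorm (x v : V) :
  is_derive x v (sqnorm (R:=R)) (2 * \sum_(j < 3) x 0 j * v 0 j).
Proof.
rewrite sqnormE.
apply: is_derive_eq (is_derive_sum (fun j => is_deriveX 2 (is_derive_coord x v 0 j))) _.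
by rewrite mulr_sumr; apply: eq_bigr => j _; rewrite expr1 mulrA.
Qed.

Lemma inversion_coord i j :
  (fun u : V => inversion u i j) = (fun u => (sqnorm u)^-1) * (fun u : V => u i j).
Proof. by apply/funext => u; rewrite /inversion mxE. Qed.

Lemma is_derive_inversion (x v : V) : x != 0 ->
  is_derive x v (inversion (R:=R))
    ((sqnorm x)^-1 *: v - (2 * (\sum_(j < 3) x 0 j * v 0 j) / sqnorm x ^+ 2) *: x).
Proof.
rewrite -sqnorm_eq0 => x0.
have [dS DS] := is_derive_sqnorm x v.
have dI : derivable (inversion (R:=R)) x v.
  apply/derivable_mxP => i j; rewrite inversion_coord.
  by apply: derivableM => //; apply: derivableV.
apply: DeriveDef => //; rewrite derive_mx //; apply/matrixP => i j.
rewrite !mxE inversion_coord deriveM ?deriveV //; last exact: derivableV.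
rewrite DS derive_val /GRing.scale /=.
by field.
Qed.

Lemma differentiable_inversion (x : V) : x != 0 -> differentiable (inversion (R:=R)) x.
Proof.
rewrite -sqnorm_eq0 => x0.
have -> : inversion (R:=R) = \sum_(i < 1) \sum_(j < 3)
    (fun u : V => inversion u i j *: delta_mx i j).
  apply/funext => u; rewrite !fct_sumE [LHS]matrix_sum_delta.
  by apply: eq_bigr => i _; rewrite fct_sumE.
apply: differentiable_sum => i; apply: differentiable_sum => j.
apply: differentiableZl; rewrite inversion_coord.
apply: differentiableM; last exact: differentiable_coord.
exact: differentiableV (differentiable_sqnorm x) x0.
Qed.

Lemma diff_inversionE (x v : V) : x != 0 ->
  'd (inversion (R:=R)) x v =
  (sqnorm x)^-1 *: v - (2 * (\sum_(j < 3) x 0 j * v 0 j) / sqnorm x ^+ 2) *: x.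
Proof.
move=> x0; rewrite -deriveE; last exact: differentiable_inversion.
by have [_ ->] := is_derive_inversion x v x0.
Qed.

End InversionChart.

Section RosslerAtInfinity.
Variables (R : realType) (a b c : R).
Notation V := 'rV[R]_3.

Let w : V := mkv 1 0 1.

Let sqnorm_w : sqnorm w = 2.
Proof. by rewrite sqnorm_mkv expr1n expr0n addr0. Qed.

Let w_neq0 : w != 0.
Proof. by rewrite -sqnorm_eq0 sqnorm_w pnatr_eq0. Qed.

Lemma field_at_infinity_rossler_ray (t : R) : t != 0 ->
  field_at_infinity (rossler a b c) (t *: w) 0 0 = - 2^-1 + (c - b) * t.
Proof.
move=> t0.
have tw0 : t *: w != 0 by rewrite scaler_eq0 negb_or t0 w_neq0.
have inv_tw : inversion (t *: w) = (2 * t)^-1 *: w.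
  by rewrite /inversion sqnormZ sqnorm_w scalerA; congr (_ *: _); field.
have inv_tw_neq0 : (2 * t)^-1 *: w != 0.
  by rewrite scaler_eq0 negb_or invr_eq0 mulf_neq0 ?pnatr_eq0 // w_neq0.
rewrite /field_at_infinity (negbTE tw0) inv_tw diff_inversionE //.
rewrite sqnormZ sqnorm_w /rossler /cx /cy /cz sum_ord3 !mxE /=.
by field.
Qed.

Lemma field_at_infinity_rossler_discontinuous :
  ~ {for 0, continuous (field_at_infinity (rossler a b c))}.
Proof.
set G := field_at_infinity (rossler a b c) => G_cont.
pose h t := G (t *: w) 0 0.
have ray_to0 : (fun t : R => t *: w) @ 0^' --> (0 : V).
  by apply: cvg_within_filter; rewrite -(scale0r w); exact: scalel_continuous.
have h_to0 : h @ 0^' --> (0 : R).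
  have G00 : G 0 0 0 = 0 by rewrite /G /field_at_infinity eqxx mxE.
  rewrite -[X in _ --> X]G00; apply: (cvg_comp _ (fun y => G y 0 0) ray_to0).
  exact: cvg_comp G_cont (@coord_continuous _ _ _ 0 0 (G 0)).
have h_to_half : h @ 0^' --> (- 2^-1 : R).
  have affine_to : (fun t : R => - 2^-1 + (c - b) * t) @ 0^' --> (- 2^-1 : R).
    have affine_cont : (fun t : R => - 2^-1 + (c - b) * t) @ 0 --> (- 2^-1 + (c - b) * 0 : R).
      by apply: cvgD; [exact: cvg_cst|apply: cvgM; [exact: cvg_cst|exact: cvg_id]].
    by rewrite mulr0 addr0 in affine_cont; apply: cvg_within_filter.
  apply: cvg_trans affine_to; apply: near_eq_cvg; near=> t.
  by rewrite /h field_at_infinity_rossler_ray //; near: t; exact: nbhs_dnbhs_neq.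
have /(_ (fmap_proper_filter h _))/eqP := norm_cvg_unique h_to_half h_to0.
by rewrite oppr_eq0 invr_eq0 pnatr_eq0.
Unshelve. all: by end_near.
Qed.

End RosslerAtInfinity.

Theorem lemma2p2 (R : realType) (P : set (R * R * R))
  (hPopen : open P) (hP : forall p, P p -> rossler_param_ok p)
  (a b c : R) (hp : P (a, b, c)) :
  ~ C1_at (field_at_infinity (rossler a b c)) 0.
Proof.
move=> [U [_ U0 G_diff _]].
apply: (@field_at_infinity_rossler_discontinuous R a b c).
exact: differentiable_continuous (G_diff 0 U0).
Qed.
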